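(* For every integer $k\ge 1$, the complete graph $K_{2k+1}$ has a quasi-majority neighbor sum distinguishing $3$-edge-coloring in which exactly $k$ vertices are each incident to $k-1$ edges of color $2$ and the remaining $k+1$ vertices are each incident to $k$ edges of color $2$.
   Context: A $3$-edge-coloring of $G$ is any map $c:E(G)\to\{1,2,3\}$ (adjacent edges may share colors). It induces $\sigma_c(v)=\sum_{u\in N(v)}c(vu)$. The coloring is neighbor sum distinguishing if $\sigma_c(u)\ne\sigma_c(v)$ for every edge $uv$, and quasi-majority if every vertex $v$ is incident to at most $\lceil d(v)/2\rceil$ edges of each single color. *)

From mathcomp Require Import all_boot.
Set Implicit Arguments. Unset Strict Implicit. Unset Printing Implicit Defensive.

(* An edge coloring of the complete graph K_n on vertex set 'I_n is encoded as a
   symmetric function c : 'I_n -> 'I_n -> nat; c u v (u != v) is the color of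
   the edge uv. The values on the diagonal are irrelevant. *)

Definition is_3_edge_coloring_Kn (n : nat) (c : 'I_n -> 'I_n -> nat) : Prop :=
  (forall u v : 'I_n, u != v -> c u v = c v u) /\
  (forall u v : 'I_n, u != v -> 1 <= c u v <= 3).

Definition sigma_Kn (n : nat) (c : 'I_n -> 'I_n -> nat) (v : 'I_n) : nat :=
  \sum_(u : 'I_n | u != v) c v u.

Definition col_deg (n : nat) (c : 'I_n -> 'I_n -> nat) (v : 'I_n) (i : nat) : nat :=
  #|[set u : 'I_n | (u != v) && (c v u == i)]|.

(* in K_n every vertex is adjacent to all others *)
Definition nsd_Kn (n : nat) (c : 'I_n -> 'I_n -> nat) : Prop :=
  forall u v : 'I_n, u != v -> sigma_Kn c u <> sigma_Kn c v.

(* degree in K_n is n-1; ceil(d/2) = uphalf d *)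
Definition quasi_majority_Kn (n : nat) (c : 'I_n -> 'I_n -> nat) : Prop :=
  forall (v : 'I_n) (i : nat), col_deg c v i <= uphalf n.-1.

From mathcomp Require Import all_boot zify.

(* Color the edge uv of K_n, n = 2k + 1 with vertices 0, ..., n - 1, by the
   parity of u + v: 2 if it is even, and otherwise 1 if u + v < n and 3 if not.
   At a vertex v the sums v + u sweep the window [v, v + n) except for the even
   value 2v, so counting parities in [v, n) and [n, v + n) gives k - floor(v/2),
   k - odd v and ceil(v/2) edges of colors 1, 2 and 3.  All are at most k, the
   odd vertices are the k vertices with k - 1 edges of color 2, and the
   weighted sum is sigma(v) = 3k + v, which separates all vertices. *)

Set Implicit Arguments.
Unset Strict Implicit.
Unset Printing Implicit Defensive.

Lemma sum_odd_nat m : \sum_(0 <= s < m) odd s = m./2.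
Proof.
by elim: m => [|m IHm]; rewrite ?big_nil // big_nat_recr //= IHm; lia.
Qed.

Lemma sum_odd_nat_range a b : a <= b -> \sum_(a <= s < b) odd s = b./2 - a./2.
Proof.
by move=> le_ab; rewrite -!sum_odd_nat (big_cat_nat (leq0n a) le_ab) addKn.
Qed.

Lemma sum_even_nat m : \sum_(0 <= s < m) ~~ odd s = uphalf m.
Proof.
by elim: m => [|m IHm]; rewrite ?big_nil // big_nat_recr //= IHm; lia.
Qed.

Lemma sum_even_nat_range a b :
  a <= b -> \sum_(a <= s < b) ~~ odd s = uphalf b - uphalf a.
Proof.
by move=> le_ab; rewrite -!sum_even_nat (big_cat_nat (leq0n a) le_ab) addKn.
Qed.

Lemma sum_ord_shift n v (F : nat -> nat) :
  \sum_(u < n) F (v + u) = \sum_(v <= s < v + n) F s.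
Proof.
elim: n => [|n IHn]; first by rewrite big_ord0 addn0 big_geq.
by rewrite big_ord_recr /= IHn addnS big_nat_recr // leq_addr.
Qed.

Section CompleteGraphColorings.

Variables (n : nat) (c : 'I_n -> 'I_n -> nat).

Lemma col_degE v i : col_deg c v i = \sum_(u | u != v) (c v u == i).
Proof.
by rewrite /col_deg -sum1dep_card big_mkcondr; apply: eq_bigr => u _; case: eqP.
Qed.

Hypothesis c3 : is_3_edge_coloring_Kn c.

Lemma sigma_Kn_col_deg v :
  sigma_Kn c v = col_deg c v 1 + 2 * col_deg c v 2 + 3 * col_deg c v 3.
Proof.
rewrite /sigma_Kn !col_degE !big_distrr -!big_split /=.
apply: eq_bigr => u neq_uv; have := c3.2 v u; rewrite eq_sym neq_uv.
by case: (c v u) => [|[|[|[|m]]]] // /(_ isT).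
Qed.

Lemma col_deg_out_of_range v i : ~~ (1 <= i <= 3) -> col_deg c v i = 0.
Proof.
move=> i_out; rewrite col_degE big1 // => u neq_uv.
by case: eqP => // eq_i; move: i_out; rewrite -eq_i c3.2 // eq_sym.
Qed.

Lemma quasi_majority_Kn_3col :
  (forall v i, 1 <= i <= 3 -> col_deg c v i <= uphalf n.-1) ->
  quasi_majority_Kn c.
Proof.
move=> col_le v i.
by case: (boolP (1 <= i <= 3)) => [/col_le //|/col_deg_out_of_range ->].
Qed.

End CompleteGraphColorings.

Section ParityColoring.

Variable n : nat.

Definition parity_color (s : nat) : nat :=
  if odd s then (if s < n then 1 else 3) else 2.

Definition parity_coloring (u v : 'I_n) : nat := parity_color (u + v).

Lemma parity_coloring_3_edge : is_3_edge_coloring_Kn parity_coloring.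
Proof.
split=> u v _; first by rewrite /parity_coloring addnC.
by rewrite /parity_coloring /parity_color; case: odd => //; case: ifP.
Qed.

Lemma col_deg_parity v i :
  col_deg parity_coloring v i =
  \sum_(v <= s < v + n) (parity_color s == i) - (2 == i).
Proof.
rewrite col_degE.
rewrite -(sum_ord_shift n v (fun s => nat_of_bool (parity_color s == i))).
by rewrite [in RHS](bigD1 v) //= {1}/parity_color addnn odd_double addKn.
Qed.

Lemma sum_parity_color_split (v : 'I_n) (F : nat -> nat) :
  \sum_(v <= s < v + n) F (parity_color s) =
  \sum_(v <= s < n) F (if odd s then 1 else 2) +
  \sum_(n <= s < v + n) F (if odd s then 3 else 2).
Proof.
rewrite (big_cat_nat (ltnW (ltn_ord v)) (leq_addl v n)).
congr (_ + _); apply: eq_big_nat => s /andP[le_vs lt_s].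
  by rewrite /parity_color lt_s.
by rewrite /parity_color ltnNge le_vs.
Qed.

Lemma parity_col_deg1 (v : 'I_n) : col_deg parity_coloring v 1 = n./2 - v./2.
Proof.
rewrite col_deg_parity subn0.
rewrite (sum_parity_color_split v (fun c => nat_of_bool (c == 1))).
rewrite (eq_bigr (fun s => nat_of_bool (odd s))) => [|s _]; last by case: odd.
rewrite [X in _ + X](eq_bigr (fun=> 0)) => [|s _]; last by case: odd.
by rewrite sum_nat_const_nat muln0 addn0 sum_odd_nat_range // ltnW.
Qed.

Lemma parity_col_deg2 (v : 'I_n) :
  col_deg parity_coloring v 2 = uphalf (v + n) - uphalf v - 1.
Proof.
rewrite col_deg_parity (eq_bigr (fun s => nat_of_bool (~~ odd s))) => [|s _].
  by rewrite sum_even_nat_range ?leq_addr.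
by rewrite /parity_color; case: odd => //; case: ifP.
Qed.

Lemma parity_col_deg3 (v : 'I_n) :
  col_deg parity_coloring v 3 = (v + n)./2 - n./2.
Proof.
rewrite col_deg_parity subn0.
rewrite (sum_parity_color_split v (fun c => nat_of_bool (c == 3))).
rewrite (eq_bigr (fun=> 0)) => [|s _]; last by case: odd.
rewrite [X in _ + X](eq_bigr (fun s => nat_of_bool (odd s))) => [|s _].
  2: by case: odd.
by rewrite sum_nat_const_nat muln0 add0n sum_odd_nat_range // leq_addl.
Qed.

End ParityColoring.

Section OddCompleteGraph.

Variable k : nat.

Local Notation n := (2 * k + 1).
Local Notation c := (@parity_coloring n).

Lemma parity_col_deg2_odd (v : 'I_n) : col_deg c v 2 = k - odd v.
Proof. by rewrite parity_col_deg2; lia. Qed.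

Lemma parity_sigma_odd (v : 'I_n) : sigma_Kn c v = 3 * k + v.
Proof.
rewrite (sigma_Kn_col_deg (parity_coloring_3_edge n)).
rewrite parity_col_deg1 parity_col_deg2_odd parity_col_deg3.
by have := ltn_ord v; lia.
Qed.

Lemma parity_coloring_nsd : nsd_Kn c.
Proof.
by move=> u v /eqP neq_uv; rewrite !parity_sigma_odd => /addnI/val_inj.
Qed.

Lemma parity_coloring_quasi_majority : quasi_majority_Kn c.
Proof.
apply: quasi_majority_Kn_3col; first exact: parity_coloring_3_edge.
move=> v [|[|[|[|i]]]] //= _; have := ltn_ord v.
- by rewrite parity_col_deg1; lia.
- by rewrite parity_col_deg2_odd; lia.
- by rewrite parity_col_deg3; lia.
Qed.

Lemma card_odd_ord : #|[set v : 'I_n | odd v]| = k.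
Proof.
rewrite -sum1dep_card big_mkcond /=.
rewrite (eq_bigr (fun v : 'I_n => nat_of_bool (odd v))) => [|v _].
  rewrite -(big_mkord xpredT (fun s => nat_of_bool (odd s))).
  by rewrite sum_odd_nat; lia.
by case: odd.
Qed.

End OddCompleteGraph.

Theorem mainTheorem18 (k : nat) (hk : 1 <= k) :
  exists c : 'I_(2 * k + 1) -> 'I_(2 * k + 1) -> nat,
    [/\ is_3_edge_coloring_Kn c, quasi_majority_Kn c, nsd_Kn c &
      exists S : {set 'I_(2 * k + 1)},
        [/\ #|S| = k,
            forall v, v \in S -> col_deg c v 2 = k - 1 &
            forall v, v \notin S -> col_deg c v 2 = k]].
Proof.
exists (@parity_coloring (2 * k + 1)); split.
- exact: parity_coloring_3_edge.
- exact: parity_coloring_quasi_majority.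
- exact: parity_coloring_nsd.
exists [set v : 'I_(2 * k + 1) | odd v].
split=> [|v|v]; rewrite ?card_odd_ord // inE parity_col_deg2_odd.
  by move->.
by move/negbTE->; rewrite subn0.
Qed.
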